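(* Let $\beta_\gamma$ be the bundle event structure with events $\{a,b,c\}$ (distinct), conflict $a\#b$ (and $b\#a$), and the single bundle $\{a,b\}\mapsto c$; its configurations are $\emptyset,\{a\},\{b\},\{a,c\},\{b,c\}$. Then there is no GES $\gamma$ with $\mathcal{C}(\gamma)=\mathcal{C}(\beta_\gamma)$.
   Context: A bundle event structure (BES) is $\beta=(E,\#,\mapsto)$ with $\#\subseteq E^2$ irreflexive and symmetric, $\mapsto\subseteq 2^E\times E$, satisfying stability: if $X\mapsto e$ then $e_1\#e_2$ for all distinct $e_1,e_2\in X$. Its traces are finite sequences $e_1\cdots e_n$ of pairwise distinct events, pairwise not in conflict, such that $X\mapsto e_i$ implies $X\cap\{e_1,\ldots,e_{i-1}\}\neq\emptyset$; its configurations $\mathcal{C}(\beta)$ are the event sets of its traces. A GES is $\gamma=(E,\#,\to,\lhd)$ with $\#\subseteq E^2$ irreflexive symmetric, $\to\subseteq E^2$, $\lhd\subseteq E^3$ with $(c,m,t)\in\lhd$ (''$m$ adds cause $c$ to $t$'') implying $\neg(c\to t)$. $\mathrm{ic}(e)=\{e'\mid e'\to e\}$, $\mathrm{ac}(H,e)=\{e'\mid\exists a\in H.(e',a,e)\in\lhd\}$. $X\to_g Y$ iff $X\subseteq Y\subseteq E$, $Y$ conflict-free, $\mathrm{ic}(e)\cup\mathrm{ac}(X,e)\subseteq X$ for all $e\in Y\setminus X$, and for all $t,m\in Y\setminus X$, $c\in E$: $(c,m,t)\in\lhd\Rightarrow c\in X$. $\mathcal{C}(\gamma)$ is the set of subsets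 of $E$ reachable from $\emptyset$ by finitely many $\to_g$-transitions. *)

(* sets over an event universe U are predicates U -> Prop. *)
From Stdlib Require Import List.
Import ListNotations.

Record BES (U : Type) := mkBES {
  bE : U -> Prop;
  bconf : U -> U -> Prop;
  bbundle : (U -> Prop) -> U -> Prop
}.
Arguments bE {U}. Arguments bconf {U}. Arguments bbundle {U}.

Definition bes_wf {U} (b : BES U) : Prop :=
  (forall x y, bconf b x y -> bE b x /\ bE b y) /\
  (forall x, ~ bconf b x x) /\
  (forall x y, bconf b x y -> bconf b y x) /\
  (forall X e, bbundle b X e -> bE b e /\ forall x, X x -> bE b x) /\
  (forall X e, bbundle b X e -> forall e1 e2, X e1 -> X e2 -> e1 <> e2 -> bconf b e1 e2).

Definition bes_trace {U} (b : BES U) (t : list U) : Prop :=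
  NoDup t /\
  (forall x, In x t -> bE b x) /\
  (forall x y, In x t -> In y t -> ~ bconf b x y) /\
  (forall i e, nth_error t i = Some e ->
     forall X, bbundle b X e -> exists x, X x /\ In x (firstn i t)).

Definition bes_config {U} (b : BES U) (X : U -> Prop) : Prop :=
  exists t, bes_trace b t /\ forall x, X x <-> In x t.

Record GES (U : Type) := mkGES {
  gE : U -> Prop;
  gconf : U -> U -> Prop;
  gcause : U -> U -> Prop;
  gadd : U -> U -> U -> Prop         (* gadd c m t : m adds cause c to t *)
}.
Arguments gE {U}. Arguments gconf {U}. Arguments gcause {U}. Arguments gadd {U}.

Definition ges_wf {U} (g : GES U) : Prop :=
  (forall x y, gconf g x y -> gE g x /\ gE g y) /\
  (forall x, ~ gconf g x x) /\
  (forall x y, gconf g x y -> gconf g y x) /\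
  (forall x y, gcause g x y -> gE g x /\ gE g y) /\
  (forall c m t, gadd g c m t -> gE g c /\ gE g m /\ gE g t) /\
  (forall c m t, gadd g c m t -> ~ gcause g c t).

Definition ic {U} (g : GES U) (e : U) : U -> Prop := fun e' => gcause g e' e.
Definition ac {U} (g : GES U) (H : U -> Prop) (e : U) : U -> Prop :=
  fun e' => exists a, H a /\ gadd g e' a e.

Definition ges_step {U} (g : GES U) (X Y : U -> Prop) : Prop :=
  (forall x, X x -> Y x) /\
  (forall x, Y x -> gE g x) /\
  (forall x y, Y x -> Y y -> ~ gconf g x y) /\
  (forall e, Y e -> ~ X e -> forall e', (ic g e e' \/ ac g X e e') -> X e') /\
  (forall t m c, Y t -> ~ X t -> Y m -> ~ X m -> gE g c -> gadd g c m t -> X c).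

Inductive ges_config {U} (g : GES U) : (U -> Prop) -> Prop :=
| ges_config_empty : forall Y, (forall x, ~ Y x) -> ges_config g Y
| ges_config_step : forall X Y, ges_config g X -> ges_step g X Y -> ges_config g Y.

Definition beta_gamma {U} (a b c : U) : BES U :=
  mkBES U (fun x => x = a \/ x = b \/ x = c)
          (fun x y => (x = a /\ y = b) \/ (x = b /\ y = a))
          (fun X e => e = c /\ forall x, X x <-> (x = a \/ x = b)).

(** In a GES, an event of a configuration has all its initial causes, and all
    causes it adds to itself, among the earlier events of that configuration.
    The configurations {a,c} and {b,c} of beta_gamma meet only in c, so c has
    no such causes at all and {c} is reachable in one step. But {c} is not a
    configuration of beta_gamma, since the bundle {a,b} |-> c is not met. *)
From Stdlib Require Import List Classical.
Import ListNotations.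

Section GesConfigurations.

Variable U : Type.
Variable g : GES U.

Lemma ges_config_events (Y : U -> Prop) (e : U) :
  ges_config g Y -> Y e -> gE g e.
Proof.
  intros HY; revert e; induction HY as [Y Hempty | X Y _ _ [_ [HE _]]].
  - intros e He; contradiction (Hempty e).
  - exact HE.
Qed.

Lemma ges_config_cause_mem (Y : U -> Prop) (e e' : U) :
  ges_config g Y -> Y e -> gcause g e' e -> Y e' /\ e' <> e.
Proof.
  intros HY; revert e e'; induction HY as [Y Hempty | X Y _ IH Hstep].
  - intros e e' He; contradiction (Hempty e).
  - destruct Hstep as [Hsub [_ [_ [Hcause _]]]].
    intros e e' He Hce.
    destruct (classic (X e)) as [Xe | nXe].
    + destruct (IH e e' Xe Hce) as [Xe' Hne]; auto.
    + assert (Xe' : X e') by (apply (Hcause e He nXe); left; exact Hce).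
      split; [auto | intros ->; contradiction].
Qed.

Lemma ges_config_self_add_mem (Y : U -> Prop) (e x : U) :
  ges_wf g -> ges_config g Y -> Y e -> gadd g x e e -> Y x /\ x <> e.
Proof.
  intros wf HY; revert e x; induction HY as [Y Hempty | X Y _ IH Hstep].
  - intros e x He; contradiction (Hempty e).
  - destruct Hstep as [Hsub [_ [_ [_ Hadd]]]].
    intros e x He Hxe.
    destruct (classic (X e)) as [Xe | nXe].
    + destruct (IH e x Xe Hxe) as [Xx Hne]; auto.
    + assert (Ex : gE g x) by (destruct wf as [_ [_ [_ [_ [Hw _]]]]]; apply (Hw _ _ _ Hxe)).
      assert (Xx : X x) by exact (Hadd e e x He nXe He nXe Ex Hxe).
      split; [auto | intros ->; contradiction].
Qed.

Lemma ges_config_singleton (e : U) :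
  ges_wf g -> gE g e -> (forall e', ~ gcause g e' e) -> (forall x, ~ gadd g x e e) ->
  ges_config g (fun x => x = e).
Proof.
  intros wf Ee Hcause Hadd.
  apply (ges_config_step g (fun _ => False)); [now apply ges_config_empty |].
  repeat split.
  - intros x [].
  - intros x ->; exact Ee.
  - intros x y -> ->; destruct wf as [_ [Hirr _]]; apply Hirr.
  - intros t -> _ e' [Hc | [m [[] _]]]; exact (Hcause _ Hc).
  - intros t m x -> _ -> _ _ Hx; exact (Hadd _ Hx).
Qed.

Lemma ges_config_meet_singleton (Y1 Y2 : U -> Prop) (e : U) :
  ges_wf g -> ges_config g Y1 -> ges_config g Y2 -> Y1 e -> Y2 e ->
  (forall x, Y1 x -> Y2 x -> x = e) ->
  ges_config g (fun x => x = e).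
Proof.
  intros wf HY1 HY2 Y1e Y2e Hmeet.
  apply ges_config_singleton; [exact wf | exact (ges_config_events _ _ HY1 Y1e) | |].
  - intros e' Hce.
    destruct (ges_config_cause_mem _ _ _ HY1 Y1e Hce) as [Y1e' Hne].
    destruct (ges_config_cause_mem _ _ _ HY2 Y2e Hce) as [Y2e' _].
    exact (Hne (Hmeet _ Y1e' Y2e')).
  - intros x Hx.
    destruct (ges_config_self_add_mem _ _ _ wf HY1 Y1e Hx) as [Y1x Hne].
    destruct (ges_config_self_add_mem _ _ _ wf HY2 Y2e Hx) as [Y2x _].
    exact (Hne (Hmeet _ Y1x Y2x)).
Qed.

End GesConfigurations.

Lemma bes_config_bundle_meet {U} (b : BES U) (Y X : U -> Prop) (e : U) :
  bes_config b Y -> Y e -> bbundle b X e -> exists x, X x /\ Y x.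
Proof.
  intros [t [[_ [_ [_ Hbundle]]] Ht]] Ye HXe.
  destruct (In_nth_error t e (proj1 (Ht e) Ye)) as [i Hi].
  destruct (Hbundle i e Hi X HXe) as [x [Xx Hin]].
  exists x; split; [exact Xx |].
  apply Ht; rewrite <- (firstn_skipn i t); apply in_or_app; left; exact Hin.
Qed.

Lemma beta_gamma_config_pair {U} (a b c : U) (x : U) :
  a <> b -> a <> c -> b <> c -> (x = a \/ x = b) ->
  bes_config (beta_gamma a b c) (fun y => y = x \/ y = c).
Proof.
  intros hab hac hbc Hx.
  assert (hxc : x <> c) by (destruct Hx as [-> | ->]; assumption).
  exists [x; c]; split; [repeat split | simpl; intros y; intuition congruence].
  - constructor; [simpl; intros [h | []]; congruence | constructor; [simpl; tauto | constructor]].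
  - simpl; intros y [Hy | [Hy | []]]; rewrite <- Hy; simpl; tauto.
  - simpl; intros y z Hy Hz [[-> ->] | [-> ->]]; intuition congruence.
  - intros [| [| i]] e Hi X [-> HX]; simpl in Hi.
    + inversion Hi; congruence.
    + exists x; split; [apply HX; exact Hx | simpl; auto].
    + destruct i; discriminate.
Qed.

Theorem lemma11 (U : Type) (a b c : U) (hab : a <> b) (hac : a <> c) (hbc : b <> c) :
  ~ exists g : GES U, ges_wf g /\
      forall X : U -> Prop, ges_config g X <-> bes_config (beta_gamma a b c) X.
Proof.
  intros [g [wf Hg]].
  assert (Hac : ges_config g (fun y => y = a \/ y = c))
    by (apply Hg, beta_gamma_config_pair; auto).
  assert (Hbc : ges_config g (fun y => y = b \/ y = c))
    by (apply Hg, beta_gamma_config_pair; auto).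
  assert (Hc : ges_config g (fun y => y = c)).
  { apply (ges_config_meet_singleton U g _ _ c wf Hac Hbc); auto.
    intros y Hy1 Hy2; intuition congruence. }
  assert (Hbundle : bbundle (beta_gamma a b c) (fun y => y = a \/ y = b) c)
    by (split; [reflexivity | tauto]).
  destruct (bes_config_bundle_meet _ _ _ c (proj1 (Hg _) Hc) eq_refl Hbundle)
    as [y [[-> | ->] Hy]]; congruence.
Qed.
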